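(* For every $z\in\mathbb{R}$ there exists a topology $\tau_z\in\mathcal{L}$ with $C(\tau_z)=(-\infty,z]$ such that all spaces $(\mathbb{R},\tau_z)$, $z\in\mathbb{R}$, are completely metrizable and pairwise homeomorphic.
   Context: $\eta$ denotes the Euclidean topology on $\mathbb{R}$. $\mathcal{L}$ denotes the family of all Hausdorff topologies $\tau$ on $\mathbb{R}$ with $\tau\subset\eta$. For $\tau\in\mathcal{L}$ and $a\in\mathbb{R}$ let $\mathcal{N}_\tau(a)$ be the neighborhood filter of $a$ in $(\mathbb{R},\tau)$; $C(\tau)$ is the set of all $a\in\mathbb{R}$ with $\mathcal{N}_\tau(a)\neq\mathcal{N}_\eta(a)$. *)

From Stdlib Require Import Reals.
Open Scope R_scope.

Record is_topology (O : (R -> Prop) -> Prop) : Prop := {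
  top_full  : O (fun _ => True);
  top_empty : O (fun _ => False);
  top_inter : forall U V, O U -> O V -> O (fun x => U x /\ V x);
  top_union : forall F : (R -> Prop) -> Prop,
      (forall U, F U -> O U) -> O (fun x => exists U, F U /\ U x)
}.

Definition euclid_open (U : R -> Prop) : Prop :=
  forall x, U x -> exists e, 0 < e /\ forall y, Rabs (y - x) < e -> U y.

Definition hausdorff (O : (R -> Prop) -> Prop) : Prop :=
  forall x y, x <> y -> exists U V, O U /\ O V /\ U x /\ V y /\
    forall z, ~ (U z /\ V z).

Definition in_L (O : (R -> Prop) -> Prop) : Prop :=
  is_topology O /\ hausdorff O /\ (forall U, O U -> euclid_open U).

Definition nbhd (O : (R -> Prop) -> Prop) (a : R) (N : R -> Prop) : Prop :=
  exists U, O U /\ U a /\ forall x, U x -> N x.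

Definition Cset (O : (R -> Prop) -> Prop) (a : R) : Prop :=
  ~ (forall N, nbhd O a N <-> nbhd euclid_open a N).

Record is_metric (d : R -> R -> R) : Prop := {
  met_nonneg : forall x y, 0 <= d x y;
  met_zero   : forall x y, d x y = 0 <-> x = y;
  met_sym    : forall x y, d x y = d y x;
  met_tri    : forall x y z, d x z <= d x y + d y z
}.

Definition metric_open (d : R -> R -> R) (U : R -> Prop) : Prop :=
  forall x, U x -> exists e, 0 < e /\ forall y, d x y < e -> U y.

Definition metric_complete (d : R -> R -> R) : Prop :=
  forall u : nat -> R,
    (forall e, 0 < e -> exists N, forall m n, (N <= m)%nat -> (N <= n)%nat ->
        d (u m) (u n) < e) ->
    exists l, forall e, 0 < e -> exists N, forall n, (N <= n)%nat -> d (u n) l < e.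

Definition completely_metrizable (O : (R -> Prop) -> Prop) : Prop :=
  exists d, is_metric d /\ (forall U, O U <-> metric_open d U) /\ metric_complete d.

Definition homeomorphic (O1 O2 : (R -> Prop) -> Prop) : Prop :=
  exists f g : R -> R,
    (forall x, g (f x) = x) /\ (forall y, f (g y) = y) /\
    (forall U, O2 U -> O1 (fun x => U (f x))) /\
    (forall U, O1 U -> O2 (fun y => U (g y))).

From Stdlib Require Import Reals Lra Lia.
Open Scope R_scope.

(* [dist0] is the l1 metric of R^3 pulled back along the injective continuous curve
   x |-> (emb1 x, emb2 x, emb3 x).  On (-oo, 0] this curve is the half-line
   {(0, 0, s) | s <= 0}; on (0, oo) its first two coordinates [bump t] and
   [t * bump t] tend to 0 while the third, [- swing t], sweeps [-t, 0] once per
   period.  So every point of the half-line is a limit of curve points with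
   x -> oo, and near a <= 0 no metric ball is Euclidean-small, whereas for x > 0
   the quotient emb2 / emb1 = x recovers x locally.  The image of the curve is
   closed in R^3, which makes [dist0] complete.  Translating by z moves the set
   C to (-oo, z], and translations are isometries between the shifted metrics. *)

Definition dist_continuous (d : R -> R -> R) : Prop :=
  forall x e, 0 < e -> exists del, 0 < del /\
    forall y, Rabs (y - x) < del -> d x y < e.

Definition balls_euclid_above (d : R -> R -> R) (z : R) : Prop :=
  forall a, z < a -> forall eps, 0 < eps -> exists e, 0 < e /\
    forall y, d a y < e -> Rabs (y - a) < eps.

Definition far_points_close_below (d : R -> R -> R) (z : R) : Prop :=
  forall a, a <= z -> forall e, 0 < e -> exists y, d a y < e /\ 1 <= Rabs (y - a).

Definition dist_cauchy (d : R -> R -> R) (u : nat -> R) : Prop :=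
  forall e, 0 < e -> exists N, forall m n, (N <= m)%nat -> (N <= n)%nat ->
    d (u m) (u n) < e.

Definition dist_cv (d : R -> R -> R) (u : nat -> R) (l : R) : Prop :=
  forall e, 0 < e -> exists N, forall n, (N <= n)%nat -> d (u n) l < e.

Lemma metric_open_topology d : is_topology (metric_open d).
Proof.
  constructor.
  - intros x _. exists 1; split; [lra | auto].
  - intros x [].
  - intros U V HU HV x [Ux Vx].
    destruct (HU x Ux) as [e1 [He1 H1]], (HV x Vx) as [e2 [He2 H2]].
    exists (Rmin e1 e2); split; [apply Rmin_pos; auto |].
    pose proof (Rmin_l e1 e2); pose proof (Rmin_r e1 e2).
    intros y Hy; split; [apply H1 | apply H2]; lra.
  - intros F HF x [U [FU Ux]].
    destruct (HF U FU x Ux) as [e [He H]].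
    exists e; split; [auto |]. intros y Hy. exists U; auto.
Qed.

Lemma metric_open_euclid_open d U :
  dist_continuous d -> metric_open d U -> euclid_open U.
Proof.
  intros Hd HU x Ux. destruct (HU x Ux) as [e [He H]].
  destruct (Hd x e He) as [del [Hdel Hb]]. exists del; split; auto.
Qed.

Lemma metric_open_preimage (d1 d2 : R -> R -> R) f :
  (forall x y, d2 (f x) (f y) = d1 x y) ->
  forall U, metric_open d2 U -> metric_open d1 (fun x => U (f x)).
Proof.
  intros Hf U HU x Ux. destruct (HU (f x) Ux) as [e [He H]].
  exists e; split; auto. intros y Hy. apply H. rewrite Hf; auto.
Qed.

Lemma Un_cv_const c : Un_cv (fun _ => c) c.
Proof. intros e He. exists 0%nat. intros. unfold Rdist. rewrite Rminus_diag, Rabs_R0. auto. Qed.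

Lemma Cauchy_crit_dominated (d : R -> R -> R) (f : R -> R) u :
  (forall x y, Rabs (f x - f y) <= d x y) ->
  dist_cauchy d u -> Cauchy_crit (fun n => f (u n)).
Proof.
  intros Hf Hu e He. destruct (Hu e He) as [N HN]. exists N.
  intros n m Hn Hm. unfold Rdist. eapply Rle_lt_trans; [apply Hf | auto].
Qed.

Section Metric.

Variable d : R -> R -> R.
Hypothesis d_metric : is_metric d.

Lemma dist_refl x : d x x = 0.
Proof. apply (met_zero d d_metric); reflexivity. Qed.

Lemma metric_ball_open a r : metric_open d (fun y => d a y < r).
Proof.
  intros x Hx. exists (r - d a x); split; [lra |].
  intros y Hy. pose proof (met_tri d d_metric a x y). lra.
Qed.

Lemma metric_open_hausdorff : hausdorff (metric_open d).
Proof.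
  intros x y Hxy.
  assert (Hd : 0 < d x y).
  { destruct (met_nonneg d d_metric x y) as [? | E]; [auto |].
    exfalso; apply Hxy, (met_zero d d_metric); auto. }
  exists (fun w => d x w < d x y / 2), (fun w => d y w < d x y / 2).
  do 2 (split; [apply metric_ball_open |]).
  rewrite !dist_refl. do 2 (split; [lra |]).
  intros w [A B]. pose proof (met_tri d d_metric x w y).
  rewrite (met_sym d d_metric w y) in *. lra.
Qed.

Lemma metric_open_in_L : dist_continuous d -> in_L (metric_open d).
Proof.
  intros Hd. split; [apply metric_open_topology |].
  split; [apply metric_open_hausdorff |].
  intros U; apply metric_open_euclid_open; auto.
Qed.

Lemma Cset_metric_open z :
  dist_continuous d -> balls_euclid_above d z -> far_points_close_below d z ->
  forall a, Cset (metric_open d) a <-> a <= z.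
Proof.
  intros Hd Habove Hbelow a. split.
  - intros HC. destruct (Rle_dec a z) as [L | L]; [auto |]. exfalso. apply HC.
    intros N; split.
    + intros [U [OU [Ua HN]]].
      exists U; split; [apply (metric_open_euclid_open d); auto | auto].
    + intros [U [OU [Ua HN]]]. destruct (OU a Ua) as [eps [Heps HU]].
      destruct (Habove a ltac:(lra) eps Heps) as [e [He Hb]].
      exists (fun y => d a y < e). split; [apply metric_ball_open |].
      rewrite dist_refl. split; [auto |]. intros y Hy. apply HN, HU, Hb; auto.
  - intros L HC.
    assert (Hn : nbhd euclid_open a (fun y => Rabs (y - a) < 1)).
    { exists (fun y => Rabs (y - a) < 1).
      split; [| split; [rewrite Rminus_diag, Rabs_R0; lra | auto]].
      intros x Hx. exists (1 - Rabs (x - a)); split; [lra |].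
      intros y Hy. replace (y - a) with ((y - x) + (x - a)) by ring.
      pose proof (Rabs_triang (y - x) (x - a)). lra. }
    apply HC in Hn. destruct Hn as [U [OU [Ua HN]]].
    destruct (OU a Ua) as [e [He HU]].
    destruct (Hbelow a L e He) as [y [Hy1 Hy2]].
    specialize (HN y (HU y Hy1)). lra.
Qed.

Lemma dist_cv_of_Un_cv u l : dist_continuous d -> Un_cv u l -> dist_cv d u l.
Proof.
  intros Hd Hu e He. destruct (Hd l e He) as [del [Hdel B]].
  destruct (Hu del Hdel) as [N HN]. exists N. intros n Hn.
  rewrite (met_sym d d_metric). apply B, HN; auto.
Qed.

End Metric.

Definition shift_dist (d : R -> R -> R) (z : R) (x y : R) : R := d (x - z) (y - z).

Section Shift.

Variable d : R -> R -> R.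

Lemma shift_dist_metric z : is_metric d -> is_metric (shift_dist d z).
Proof.
  intros H; unfold shift_dist; constructor.
  - intros; apply (met_nonneg d H).
  - intros x y; rewrite (met_zero d H); split; intros; lra.
  - intros; apply (met_sym d H).
  - intros; apply (met_tri d H).
Qed.

Lemma shift_dist_continuous z : dist_continuous d -> dist_continuous (shift_dist d z).
Proof.
  intros H x e He. destruct (H (x - z) e He) as [del [Hdel Hb]].
  exists del; split; auto. intros y Hy. apply Hb.
  replace (y - z - (x - z)) with (y - x) by ring; auto.
Qed.

Lemma shift_balls_euclid_above z :
  balls_euclid_above d 0 -> balls_euclid_above (shift_dist d z) z.
Proof.
  intros H a Ha eps Heps. destruct (H (a - z) ltac:(lra) eps Heps) as [e [He Hb]].
  exists e; split; auto. intros y Hy. specialize (Hb (y - z) Hy).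
  replace (y - z - (a - z)) with (y - a) in Hb by ring; auto.
Qed.

Lemma shift_far_points_close_below z :
  far_points_close_below d 0 -> far_points_close_below (shift_dist d z) z.
Proof.
  intros H a Ha e He. destruct (H (a - z) ltac:(lra) e He) as [y [H1 H2]].
  exists (y + z). unfold shift_dist. replace (y + z - z) with y by ring.
  replace (y + z - a) with (y - (a - z)) by ring. auto.
Qed.

Lemma shift_dist_complete z : metric_complete d -> metric_complete (shift_dist d z).
Proof.
  intros H u Hu. destruct (H (fun n => u n - z) Hu) as [l Hl].
  exists (l + z). unfold shift_dist. replace (l + z - z) with l by ring. auto.
Qed.

Lemma shift_dist_translate z w x y :
  shift_dist d w (x - z + w) (y - z + w) = shift_dist d z x y.
Proof. unfold shift_dist. f_equal; ring. Qed.

End Shift.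

Definition sum3_dist (f g h : R -> R) (x y : R) : R :=
  Rabs (f x - f y) + Rabs (g x - g y) + Rabs (h x - h y).

Section Sum3.

Variables f g h : R -> R.

Lemma sum3_dist_bounds x y :
  Rabs (f x - f y) <= sum3_dist f g h x y /\
  Rabs (g x - g y) <= sum3_dist f g h x y /\
  Rabs (h x - h y) <= sum3_dist f g h x y.
Proof.
  unfold sum3_dist. pose proof (Rabs_pos (f x - f y)).
  pose proof (Rabs_pos (g x - g y)). pose proof (Rabs_pos (h x - h y)). lra.
Qed.

Lemma sum3_dist_metric :
  (forall x y, f x = f y -> g x = g y -> h x = h y -> x = y) ->
  is_metric (sum3_dist f g h).
Proof.
  intros Hinj. unfold sum3_dist. constructor.
  - intros x y. pose proof (Rabs_pos (f x - f y)).
    pose proof (Rabs_pos (g x - g y)). pose proof (Rabs_pos (h x - h y)). lra.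
  - intros x y; split.
    + intros H. pose proof (Rabs_pos (f x - f y)) as Ef.
      pose proof (Rabs_pos (g x - g y)) as Eg. pose proof (Rabs_pos (h x - h y)) as Eh.
      assert (Z : forall r, Rabs r <= 0 -> r = 0).
      { intros r Hr. destruct (Req_dec r 0) as [? | N]; [auto |].
        apply Rabs_no_R0 in N. pose proof (Rabs_pos r). lra. }
      apply Hinj; apply Rminus_diag_uniq, Z; lra.
    + intros ->. rewrite !Rminus_diag, Rabs_R0. ring.
  - intros x y.
    rewrite (Rabs_minus_sym (f x)), (Rabs_minus_sym (g x)), (Rabs_minus_sym (h x)).
    reflexivity.
  - intros x y z.
    replace (f x - f z) with ((f x - f y) + (f y - f z)) by ring.
    replace (g x - g z) with ((g x - g y) + (g y - g z)) by ring.
    replace (h x - h z) with ((h x - h y) + (h y - h z)) by ring.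
    pose proof (Rabs_triang (f x - f y) (f y - f z)).
    pose proof (Rabs_triang (g x - g y) (g y - g z)).
    pose proof (Rabs_triang (h x - h y) (h y - h z)). lra.
Qed.

Lemma continuity_pt_eps (k : R -> R) x : continuity_pt k x -> forall e, 0 < e ->
  exists del, 0 < del /\ forall y, Rabs (y - x) < del -> Rabs (k x - k y) < e.
Proof.
  intros H e He. destruct (H e He) as [del [Hdel Hb]]. exists del; split; auto.
  intros y Hy. rewrite Rabs_minus_sym. destruct (Req_dec x y) as [-> | N].
  - rewrite Rminus_diag, Rabs_R0; auto.
  - apply (Hb y). split; [split; [exact I | auto] | auto].
Qed.

Lemma sum3_dist_continuous :
  continuity f -> continuity g -> continuity h -> dist_continuous (sum3_dist f g h).
Proof.
  intros Cf Cg Ch x e He.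
  destruct (continuity_pt_eps f x (Cf x) (e / 3) ltac:(lra)) as [d1 [H1 B1]].
  destruct (continuity_pt_eps g x (Cg x) (e / 3) ltac:(lra)) as [d2 [H2 B2]].
  destruct (continuity_pt_eps h x (Ch x) (e / 3) ltac:(lra)) as [d3 [H3 B3]].
  exists (Rmin d1 (Rmin d2 d3)). split; [repeat apply Rmin_pos; auto |].
  intros y Hy. pose proof (Rmin_l d1 (Rmin d2 d3)). pose proof (Rmin_r d1 (Rmin d2 d3)).
  pose proof (Rmin_l d2 d3). pose proof (Rmin_r d2 d3).
  specialize (B1 y ltac:(lra)). specialize (B2 y ltac:(lra)). specialize (B3 y ltac:(lra)).
  unfold sum3_dist. lra.
Qed.

End Sum3.

Definition pos_part (x : R) : R := (x + Rabs x) / 2.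
Definition bump (t : R) : R := t / (1 + t ^ 4).
Definition swing (t : R) : R := t * (1 - cos t) / 2.

Definition emb1 (x : R) : R := bump (pos_part x).
Definition emb2 (x : R) : R := pos_part x * bump (pos_part x).
Definition emb3 (x : R) : R := x - pos_part x - swing (pos_part x).

Definition dist0 : R -> R -> R := sum3_dist emb1 emb2 emb3.

Lemma one_add_pow4_gt0 t : 0 < 1 + t ^ 4.
Proof. replace (t ^ 4) with ((t * t) * (t * t)) by ring. nra. Qed.

Lemma bump_mul t : bump t * (1 + t ^ 4) = t.
Proof. unfold bump. field. pose proof (one_add_pow4_gt0 t); lra. Qed.

Lemma bump_ge0 t : 0 <= t -> 0 <= bump t.
Proof.
  intros Ht. unfold bump. apply Rmult_le_pos; [auto |].
  left; apply Rinv_0_lt_compat, one_add_pow4_gt0.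
Qed.

Lemma bump_gt0 t : 0 < t -> 0 < bump t.
Proof. intros Ht. unfold bump. apply Rdiv_lt_0_compat; [auto | apply one_add_pow4_gt0]. Qed.

Lemma swing_ge0 t : 0 <= t -> 0 <= swing t.
Proof. intros Ht. unfold swing. pose proof (COS_bound t). nra. Qed.

Lemma pos_part_nonpos x : x <= 0 -> pos_part x = 0.
Proof. intros; unfold pos_part; rewrite Rabs_left1; lra. Qed.

Lemma pos_part_id x : 0 <= x -> pos_part x = x.
Proof. intros; unfold pos_part; rewrite Rabs_right; lra. Qed.

Lemma pos_part_ge0 x : 0 <= pos_part x.
Proof. destruct (Rle_dec x 0); [rewrite pos_part_nonpos | rewrite pos_part_id]; lra. Qed.

Lemma emb_nonpos x : x <= 0 -> emb1 x = 0 /\ emb2 x = 0 /\ emb3 x = x.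
Proof.
  intros Hx. unfold emb1, emb2, emb3, bump, swing.
  rewrite pos_part_nonpos by auto. repeat split; unfold Rdiv; ring.
Qed.

Lemma emb_pos x : 0 < x -> emb1 x = bump x /\ emb2 x = x * bump x /\ emb3 x = - swing x.
Proof.
  intros Hx. unfold emb1, emb2, emb3. rewrite pos_part_id by lra. repeat split; ring.
Qed.

Lemma emb1_ge0 x : 0 <= emb1 x.
Proof. apply bump_ge0, pos_part_ge0. Qed.

Lemma emb2_ge0 x : 0 <= emb2 x.
Proof.
  unfold emb2. apply Rmult_le_pos; [apply pos_part_ge0 | apply bump_ge0, pos_part_ge0].
Qed.

Lemma emb3_le0 x : emb3 x <= 0.
Proof.
  destruct (Rle_dec x 0) as [L | L].
  - destruct (emb_nonpos x L) as [_ [_ ->]]; auto.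
  - destruct (emb_pos x ltac:(lra)) as [_ [_ ->]]. pose proof (swing_ge0 x); lra.
Qed.

Lemma emb1_gt0_pos x : 0 < emb1 x -> 0 < x.
Proof.
  intros H. destruct (Rle_dec x 0) as [L | L]; [| lra].
  destruct (emb_nonpos x L) as [E _]. lra.
Qed.

Lemma emb_injective x y : emb1 x = emb1 y -> emb2 x = emb2 y -> emb3 x = emb3 y -> x = y.
Proof.
  intros E1 E2 E3.
  destruct (Rle_dec x 0) as [Lx | Lx], (Rle_dec y 0) as [Ly | Ly].
  - destruct (emb_nonpos x Lx) as [_ [_ Sx]], (emb_nonpos y Ly) as [_ [_ Sy]]. lra.
  - destruct (emb_nonpos x Lx) as [Px _], (emb_pos y ltac:(lra)) as [Py _].
    pose proof (bump_gt0 y ltac:(lra)). lra.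
  - destruct (emb_pos x ltac:(lra)) as [Px _], (emb_nonpos y Ly) as [Py _].
    pose proof (bump_gt0 x ltac:(lra)). lra.
  - destruct (emb_pos x ltac:(lra)) as [Px [Cx _]], (emb_pos y ltac:(lra)) as [Py [Cy _]].
    pose proof (bump_gt0 y ltac:(lra)).
    rewrite Px, Py in E1. rewrite Cx, Cy, E1 in E2.
    apply Rmult_eq_reg_r with (bump y); lra.
Qed.

Lemma dist0_metric : is_metric dist0.
Proof. apply sum3_dist_metric, emb_injective. Qed.

Lemma dist0_continuous : dist_continuous dist0.
Proof.
  assert (D : forall t, 1 + t ^ 4 <> 0) by (intros t; pose proof (one_add_pow4_gt0 t); lra).
  apply sum3_dist_continuous.
  - unfold emb1, bump, pos_part. reg. intros; apply D.
  - unfold emb2, bump, pos_part. reg. intros; apply D.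
  - unfold emb3, swing, pos_part. reg.
Qed.

Lemma pow3_le_one_add_pow4 t : 0 <= t -> t ^ 3 <= 1 + t ^ 4.
Proof.
  intros Ht. destruct (Rle_dec t 1).
  - assert (t * t <= 1) by nra. assert (t ^ 3 <= 1) by (simpl; nra).
    assert (0 <= t ^ 4) by (apply pow_le; lra). lra.
  - assert (0 <= t ^ 3) by (apply pow_le; lra).
    replace (t ^ 4) with (t ^ 3 * t) by ring. nra.
Qed.

Lemma pow2_le_one_add_pow4 t : t ^ 2 <= 1 + t ^ 4.
Proof.
  pose proof (pow2_ge_0 t). replace (t ^ 4) with (t ^ 2 * t ^ 2) by ring. nra.
Qed.

Lemma mul_bump_sqr_le t : 0 <= t -> (t * bump t) ^ 2 <= bump t.
Proof.
  intros Ht. pose proof (bump_mul t). pose proof (bump_ge0 t Ht).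
  pose proof (pow3_le_one_add_pow4 t Ht). pose proof (one_add_pow4_gt0 t).
  apply Rmult_le_reg_r with (1 + t ^ 4); [auto |].
  replace ((t * bump t) ^ 2 * (1 + t ^ 4)) with (t ^ 2 * bump t * (bump t * (1 + t ^ 4)))
    by ring.
  rewrite H. nra.
Qed.

Lemma emb2_sqr_le x : emb2 x ^ 2 <= emb1 x.
Proof. apply mul_bump_sqr_le, pos_part_ge0. Qed.

Lemma mul_bump_le1 t : 0 <= t -> t * bump t <= 1.
Proof.
  intros Ht. pose proof (bump_mul t). pose proof (pow2_le_one_add_pow4 t).
  pose proof (one_add_pow4_gt0 t).
  apply Rmult_le_reg_r with (1 + t ^ 4); [auto |].
  replace (t * bump t * (1 + t ^ 4)) with (t * (bump t * (1 + t ^ 4))) by ring.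
  rewrite H. nra.
Qed.

Lemma bump_tail_le t : 1 <= t -> (bump t + t * bump t) * t <= 2.
Proof.
  intros Ht. pose proof (bump_mul t). pose proof (pow2_le_one_add_pow4 t).
  pose proof (pow3_le_one_add_pow4 t ltac:(lra)). pose proof (one_add_pow4_gt0 t).
  apply Rmult_le_reg_r with (1 + t ^ 4); [auto |].
  replace ((bump t + t * bump t) * t * (1 + t ^ 4)) with
    ((t + t ^ 2) * (bump t * (1 + t ^ 4))) by ring.
  rewrite H. lra.
Qed.

Lemma dist0_pos_estimate x y :
  0 < x -> 0 < y -> Rabs (x - y) * bump y <= (1 + x) * dist0 x y.
Proof.
  intros Hx Hy.
  destruct (emb_pos x Hx) as [Px [Cx _]], (emb_pos y Hy) as [Py [Cy _]].
  destruct (sum3_dist_bounds emb1 emb2 emb3 x y) as [B1 [B2 _]].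
  fold dist0 in B1, B2.
  rewrite <- (Rabs_right (bump y)) by (left; apply bump_gt0; auto).
  rewrite <- Rabs_mult.
  replace ((x - y) * bump y) with ((emb2 x - emb2 y) + x * (emb1 y - emb1 x))
    by (rewrite Px, Py, Cx, Cy; ring).
  eapply Rle_trans; [apply Rabs_triang |].
  rewrite Rabs_mult, (Rabs_right x), (Rabs_minus_sym (emb1 y)) by lra. nra.
Qed.

Lemma dist0_balls_euclid_above : balls_euclid_above dist0 0.
Proof.
  intros a Ha eps Heps.
  pose proof (bump_gt0 a Ha) as Hb.
  set (e := eps * bump a / (2 * (1 + a))).
  assert (He : 0 < e) by (unfold e; apply Rdiv_lt_0_compat; nra).
  assert (Ke : (1 + a) * e = eps * bump a / 2) by (unfold e; field; lra).
  exists (Rmin (bump a / 2) e). split; [apply Rmin_pos; lra |].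
  intros y Hy. pose proof (Rmin_l (bump a / 2) e). pose proof (Rmin_r (bump a / 2) e).
  destruct (sum3_dist_bounds emb1 emb2 emb3 a y) as [B1 _]. fold dist0 in B1.
  destruct (emb_pos a Ha) as [Pa _].
  assert (Hya : bump a / 2 < emb1 y).
  { pose proof (Rle_abs (emb1 a - emb1 y)). lra. }
  assert (Hy0 : 0 < y) by (apply emb1_gt0_pos; lra).
  destruct (emb_pos y Hy0) as [Py _].
  pose proof (dist0_pos_estimate a y Ha Hy0).
  assert ((1 + a) * dist0 a y < (1 + a) * e) by (apply Rmult_lt_compat_l; lra).
  rewrite Rabs_minus_sym.
  apply Rmult_lt_reg_r with (bump y); [lra | nra].
Qed.

(* [swing] vanishes at [2 n PI] and equals the identity at [PI + 2 n PI]. *)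
Lemma swing_hits_tail m b : 0 <= b -> exists y, m <= y /\ swing y = b.
Proof.
  intros Hb.
  destruct (INR_unbounded (Rmax m b)) as [n Hn].
  pose proof (Rmax_l m b). pose proof (Rmax_r m b). pose proof (pos_INR n).
  pose proof PI2_1.
  set (t1 := 0 + 2 * INR n * PI). set (t2 := PI + 2 * INR n * PI).
  assert (S1 : swing t1 = 0).
  { unfold swing, t1. rewrite (cos_period 0 n), cos_0. unfold Rdiv; ring. }
  assert (S2 : swing t2 = t2).
  { unfold swing, t2. rewrite (cos_period PI n), cos_PI. field. }
  assert (Ht1 : INR n <= t1).
  { unfold t1. assert (0 <= INR n * (2 * PI - 1)) by (apply Rmult_le_pos; lra). lra. }
  assert (Ht12 : t1 <= t2) by (unfold t1, t2; lra).
  assert (Hc : continuity (fun t => swing t - b)) by (unfold swing; reg).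
  destruct (IVT_cor (fun t => swing t - b) t1 t2 Hc Ht12) as [y [Hy1 Hy2]].
  { rewrite S1, S2. assert (0 <= b * (t2 - b)) by (apply Rmult_le_pos; lra). lra. }
  exists y. split; lra.
Qed.

Lemma dist0_far_points_close_below : far_points_close_below dist0 0.
Proof.
  intros a Ha e He.
  destruct (swing_hits_tail (1 + 2 / e) (- a) ltac:(lra)) as [y [Hy Sy]].
  assert (H2e : 0 < 2 / e) by (apply Rdiv_lt_0_compat; lra).
  assert (Hy0 : 0 < y) by lra.
  destruct (emb_nonpos a Ha) as [Pa [Ca Sa]], (emb_pos y Hy0) as [Py [Cy Sy']].
  pose proof (bump_gt0 y Hy0). pose proof (bump_tail_le y ltac:(lra)).
  exists y. split.
  - unfold dist0, sum3_dist. rewrite Pa, Ca, Sa, Py, Cy, Sy', Sy.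
    replace (a - - - a) with 0 by ring. rewrite Rabs_R0.
    rewrite Rabs_left by lra. rewrite Rabs_left by nra.
    assert (2 / e * e = 2) by (field; lra).
    assert (2 < e * y) by nra.
    nra.
  - rewrite Rabs_right by lra. lra.
Qed.

Lemma dist0_cv_nonpos u s :
  Un_cv (fun n => emb1 (u n)) 0 -> Un_cv (fun n => emb3 (u n)) s -> s <= 0 ->
  dist_cv dist0 u s.
Proof.
  intros H1 H3 Hs e He.
  destruct (emb_nonpos s Hs) as [Ps [Cs Ss]].
  pose proof (Rmin_l (e / 3) ((e / 3) ^ 2)). pose proof (Rmin_r (e / 3) ((e / 3) ^ 2)).
  set (e' := Rmin (e / 3) ((e / 3) ^ 2)) in *.
  assert (He' : 0 < e') by (apply Rmin_pos; [lra | apply pow_lt; lra]).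
  destruct (H1 e' He') as [N1 HN1], (H3 (e / 3) ltac:(lra)) as [N3 HN3].
  exists (max N1 N3). intros n Hn.
  specialize (HN1 n ltac:(lia)). specialize (HN3 n ltac:(lia)). unfold Rdist in HN1, HN3.
  pose proof (emb1_ge0 (u n)). pose proof (emb2_ge0 (u n)). pose proof (emb2_sqr_le (u n)).
  rewrite Rminus_0_r, Rabs_right in HN1 by lra.
  assert (emb2 (u n) < e / 3).
  { destruct (Rlt_or_le (emb2 (u n)) (e / 3)) as [? | Hc]; [auto |].
    assert ((e / 3) ^ 2 <= emb2 (u n) ^ 2) by (apply pow_incr; lra). lra. }
  unfold dist0, sum3_dist. rewrite Ps, Cs, Ss, !Rminus_0_r.
  rewrite (Rabs_right (emb1 (u n))), (Rabs_right (emb2 (u n))) by lra. lra.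
Qed.

(* Once [emb1] stays above [c], the points are positive and bounded by [1 / c],
   so [dist0_pos_estimate] controls the Euclidean distance. *)
Lemma dist0_cauchy_Cauchy_crit c N u :
  0 < c -> (forall n, (N <= n)%nat -> c < emb1 (u n)) ->
  dist_cauchy dist0 u -> Cauchy_crit u.
Proof.
  intros Hc Hlow Hu eps Heps.
  set (K := 1 + 1 / c).
  assert (HK : 0 < K) by (unfold K; assert (0 < 1 / c) by (apply Rdiv_lt_0_compat; lra); lra).
  destruct (Hu (eps * c / K) ltac:(apply Rdiv_lt_0_compat; nra)) as [N1 HN1].
  exists (max N N1). intros n m Hn Hm. unfold Rdist.
  pose proof (Hlow n ltac:(lia)) as Ln. pose proof (Hlow m ltac:(lia)) as Lm.
  specialize (HN1 m n ltac:(lia) ltac:(lia)).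
  assert (Pn : 0 < u n) by (apply emb1_gt0_pos; lra).
  assert (Pm : 0 < u m) by (apply emb1_gt0_pos; lra).
  destruct (emb_pos (u n) Pn) as [En _], (emb_pos (u m) Pm) as [Em _].
  assert (Bm : u m < 1 / c).
  { pose proof (mul_bump_le1 (u m) ltac:(lra)).
    apply Rmult_lt_reg_r with c; [auto |]. replace (1 / c * c) with 1 by (field; lra). nra. }
  pose proof (dist0_pos_estimate (u m) (u n) Pm Pn) as Est.
  pose proof (met_nonneg dist0 dist0_metric (u m) (u n)).
  pose proof (Rabs_pos (u n - u m)).
  rewrite Rabs_minus_sym in Est.
  assert (Rabs (u n - u m) * c <= K * dist0 (u m) (u n)) by (unfold K; nra).
  assert (K * dist0 (u m) (u n) < K * (eps * c / K)) by (apply Rmult_lt_compat_l; auto).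
  replace (K * (eps * c / K)) with (eps * c) in * by (field; lra).
  apply Rmult_lt_reg_r with c; lra.
Qed.

Lemma dist0_complete : metric_complete dist0.
Proof.
  intros u Hu. change (dist_cauchy dist0 u) in Hu.
  destruct (R_complete _ (Cauchy_crit_dominated dist0 emb1 u
    (fun x y => proj1 (sum3_dist_bounds emb1 emb2 emb3 x y)) Hu)) as [P HP].
  assert (LP : 0 <= P) by (eapply Rle_cv_lim; [intros n; apply emb1_ge0 | apply Un_cv_const | exact HP]).
  destruct LP as [LP | <-].
  - destruct (HP (P / 2) ltac:(lra)) as [N HN].
    assert (Hlow : forall n, (N <= n)%nat -> P / 2 < emb1 (u n)).
    { intros n Hn. specialize (HN n Hn). unfold Rdist in HN.
      pose proof (Rle_abs (P - emb1 (u n))). rewrite Rabs_minus_sym in HN. lra. }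
    destruct (R_complete u (dist0_cauchy_Cauchy_crit (P / 2) N u ltac:(lra) Hlow Hu))
      as [l Hl].
    exists l. apply dist_cv_of_Un_cv; [apply dist0_metric | apply dist0_continuous | auto].
  - destruct (R_complete _ (Cauchy_crit_dominated dist0 emb3 u
      (fun x y => proj2 (proj2 (sum3_dist_bounds emb1 emb2 emb3 x y))) Hu)) as [s Hs].
    exists s. apply dist0_cv_nonpos; auto.
    eapply Rle_cv_lim; [intros n; apply emb3_le0 | exact Hs | apply Un_cv_const].
Qed.

Theorem proposition5 :
  exists tau : R -> (R -> Prop) -> Prop,
    (forall z, in_L (tau z) /\ (forall a, Cset (tau z) a <-> a <= z)) /\
    (forall z, completely_metrizable (tau z)) /\
    (forall z w, homeomorphic (tau z) (tau w)).
Proof.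
  exists (fun z => metric_open (shift_dist dist0 z)).
  assert (M : forall z, is_metric (shift_dist dist0 z))
    by (intros; apply shift_dist_metric, dist0_metric).
  assert (C : forall z, dist_continuous (shift_dist dist0 z))
    by (intros; apply shift_dist_continuous, dist0_continuous).
  split; [| split].
  - intros z. split; [apply metric_open_in_L; auto |].
    apply Cset_metric_open; auto.
    + apply shift_balls_euclid_above, dist0_balls_euclid_above.
    + apply shift_far_points_close_below, dist0_far_points_close_below.
  - intros z. exists (shift_dist dist0 z).
    split; [auto | split; [reflexivity | apply shift_dist_complete, dist0_complete]].
  - intros z w. exists (fun x => x - z + w), (fun y => y - w + z).
    split; [intros; ring |]. split; [intros; ring |].
    split; apply metric_open_preimage; intros; apply shift_dist_translate.
Qed.
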